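(* Let $\Gamma$ be a finite simplicial graph whose set $S$ of social vertices is non-empty, let $k=|S|$, $\Delta=\Gamma\setminus S$, and $n=|\Delta|$ (number of vertices). Let $\Phi_\Delta\le\mathrm{GL}(n,\mathbb{Z})$ be the image of $\mathrm{Aut}(A_\Delta)$ under the homomorphism induced by abelianising $A_\Delta$. Write matrices in $\mathrm{GL}(kn,\mathbb{Z})$ in $k\times k$ block form with $n\times n$ blocks, $M=(A_{ij})$. Let $Q\le\mathrm{GL}(kn,\mathbb{Z})$ be the subgroup $Q=G_1\times G_2$ where $G_1=\{(a_{ij}I_n)\mid (a_{ij})\in\mathrm{GL}(k,\mathbb{Z})\}$ and $G_2=\{\mathrm{Diag}(M,\dots,M)\mid M\in\Phi_\Delta\}$. Then the centraliser $C(Q)$ of $Q$ in $\mathrm{GL}(kn,\mathbb{Z})$ is a subgroup of $\{\mathrm{Diag}(M,\dots,M)\mid M\in\mathrm{GL}(n,\mathbb{Z})\}$.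
   Context: For a finite simplicial graph $\Gamma=(V,E)$, $A_\Gamma=\langle v\in V\mid [v,w]=1 \text{ for }(v,w)\in E\rangle$. A vertex is social if it is adjacent to every other vertex. $I_n$ is the $n\times n$ identity matrix, and $\mathrm{Diag}(D_1,\dots,D_k)$ denotes the block diagonal matrix with diagonal blocks $D_1,\dots,D_k$ and zero off-diagonal blocks. *)

From mathcomp Require Import all_boot all_order all_algebra.
From mathcomp.real_closed Require Export mxtens.
From Stdlib Require Export Relations.
Set Implicit Arguments. Unset Strict Implicit. Unset Printing Implicit Defensive.
Import GRing.Theory Num.Theory.
Local Open Scope ring_scope.

(* A finite simplicial graph: vertex type V (a finType) with a symmetric,
   irreflexive adjacency relation e. *)

Definition social (V : finType) (e : rel V) : {set V} :=
  [set v | [forall w, (w != v) ==> e v w]].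

Definition delta (V : finType) (e : rel V) : {set V} := ~: social e.

(* Words in the generators of A_Delta and their inverses:
   (v, false) = v, (v, true) = v^-1. *)
Definition letter (V : finType) := (V * bool)%type.

Section RAAG.
Variables (V : finType) (e : rel V).
Local Notation D := (delta e).

Inductive raag_step : seq (letter V) -> seq (letter V) -> Prop :=
| raag_free u w x b : x \in D ->
    raag_step (u ++ (x, b) :: (x, ~~ b) :: w) (u ++ w)
| raag_comm u w x y b c : x \in D -> y \in D -> e x y ->
    raag_step (u ++ (x, b) :: (y, c) :: w) (u ++ (y, c) :: (x, b) :: w).

Definition raag_eq : relation (seq (letter V)) := clos_refl_sym_trans _ raag_step.

Definition Dword (w : seq (letter V)) : bool := all (fun x => x.1 \in D) w.

Definition inv_word (w : seq (letter V)) : seq (letter V) :=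
  rev [seq (x.1, ~~ x.2) | x <- w].

Definition subst (phi : V -> seq (letter V)) (w : seq (letter V)) :=
  flatten [seq (if x.2 then inv_word (phi x.1) else phi x.1) | x <- w].

Definition raag_endo (phi : V -> seq (letter V)) : Prop :=
  (forall v, v \in D -> Dword (phi v)) /\
  (forall w1 w2, Dword w1 -> Dword w2 -> raag_eq w1 w2 ->
     raag_eq (subst phi w1) (subst phi w2)).

Definition raag_aut (phi : V -> seq (letter V)) : Prop :=
  raag_endo phi /\
  exists psi, raag_endo psi /\
    forall w, Dword w ->
      raag_eq (subst psi (subst phi w)) w /\ raag_eq (subst phi (subst psi w)) w.

Definition expsum (v : V) (w : seq (letter V)) : int :=
  \sum_(x <- w) (if x.1 == v then (if x.2 then -1 else 1) else 0).

(* matrix of the induced map on the abelianisation Z^n, with the generators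
   of Delta ordered by enum_val; column s = image of the s-th generator *)
Definition ab_mx (phi : V -> seq (letter V)) : 'M[int]_#|D| :=
  \matrix_(r, s) expsum (enum_val r) (phi (enum_val s)).

Definition PhiDelta (M : 'M[int]_#|D|) : Prop :=
  exists phi, raag_aut phi /\ M = ab_mx phi.

End RAAG.

(* Q contains (A ⊗ I_n)(I_k ⊗ I_n) = A ⊗ I_n for every A in GL(k, Z), since the identity
   automorphism of A_Delta gives I_n ∈ Phi_Delta.  Already commuting with the elementary
   matrices (I_k + E_ij) ⊗ I_n forces X to commute with every E_ij ⊗ I_n for i ≠ j, which
   kills the off-diagonal blocks of X and makes all diagonal blocks equal to the first one,
   M say.  The same applies to X^-1, so X^-1 = I_k ⊗ N and M N = I_n. *)

From mathcomp Require Import all_boot all_order all_algebra.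
From mathcomp.real_closed Require Import mxtens.
Set Implicit Arguments. Unset Strict Implicit. Unset Printing Implicit Defensive.
Import GRing.Theory Num.Theory.
Local Open Scope ring_scope.

Section TensorBlocks.
Variable R : pzRingType.

Lemma tensmx11 k n : (1%:M : 'M[R]_k) *t (1%:M : 'M[R]_n) = 1%:M.
Proof.
apply/matrixP=> p q; case: (mxtens_indexP p)=> a r; case: (mxtens_indexP q)=> b s.
rewrite tensmxE !mxE (can_eq (@mxtens_indexK _ _)) xpair_eqE.
by case: (a == b); case: (r == s); rewrite ?mulr1 ?mulr0.
Qed.

Lemma tensmxDl k n (A B : 'M[R]_k) (C : 'M[R]_n) : (A + B) *t C = A *t C + B *t C.
Proof. by apply/matrixP=> p q; rewrite !mxE mulrDl. Qed.

Lemma mul_tensmx_delta1E k n (Z : 'M[R]_(k * n)) (i j b : 'I_k) (s : 'I_n) p :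
  (Z *m (delta_mx i j *t (1%:M : 'M_n))) p (mxtens_index (b, s))
  = (j == b)%:R * Z p (mxtens_index (i, s)).
Proof.
rewrite mxE (bigD1 (mxtens_index (i, s))) //= tensmxE !mxE !eqxx /= mulr1.
rewrite big1 ?addr0; first by rewrite mulr_natr mulr_natl eq_sym.
move=> t; case: (mxtens_indexP t)=> c r neq_t.
rewrite tensmxE !mxE.
have [ci|_] := eqVneq c i; last by rewrite mul0r mulr0.
have [rs|_] := eqVneq r s; last by rewrite !mulr0.
by move: neq_t; rewrite ci rs eqxx.
Qed.

Lemma mul_delta1_tensmxE k n (Z : 'M[R]_(k * n)) (i j a : 'I_k) (r : 'I_n) q :
  ((delta_mx i j *t (1%:M : 'M_n)) *m Z) (mxtens_index (a, r)) q
  = (a == i)%:R * Z (mxtens_index (j, r)) q.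
Proof.
rewrite mxE (bigD1 (mxtens_index (j, r))) //= tensmxE !mxE !eqxx /= andbT mulr1.
rewrite big1 ?addr0 //.
move=> t; case: (mxtens_indexP t)=> c s neq_t.
rewrite tensmxE !mxE.
have [cj|_] := eqVneq c j; last by rewrite andbF !mul0r.
have [rs|_] := eqVneq r s; last by rewrite mulr0 mul0r.
by move: neq_t; rewrite cj rs eqxx.
Qed.

Definition diag_block {k n} (i : 'I_k) (Z : 'M[R]_(k * n)) : 'M[R]_n :=
  \matrix_(r, s) Z (mxtens_index (i, r)) (mxtens_index (i, s)).

Lemma diag_block_tens1mx k n (i : 'I_k) (M : 'M[R]_n) :
  diag_block i ((1%:M : 'M_k) *t M) = M.
Proof. by apply/matrixP=> r s; rewrite mxE tensmxE mxE eqxx mul1r. Qed.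

End TensorBlocks.

Section CommutantOfScalarBlocks.
Variables (R : comUnitRingType) (k n : nat).

Lemma unitmx_1Ddelta (i j : 'I_k) :
  i != j -> (1%:M + delta_mx i j : 'M[R]_k) \in unitmx.
Proof.
move=> neq_ij.
suff /mulmx1_unit[] : (1%:M + delta_mx i j) *m (1%:M - delta_mx i j) = 1%:M :> 'M[R]_k.
  by [].
rewrite mulmxDl !mulmxBr !mul1mx !mulmx1 mul_delta_mx_0 1?eq_sym //.
by rewrite subr0 subrK.
Qed.

Lemma commute_invmx (Z C : 'M[R]_n) :
  Z \in unitmx -> Z *m C = C *m Z -> invmx Z *m C = C *m invmx Z.
Proof.
move=> Zu ZC.
by rewrite -[_ *m C]mulmx1 -(mulmxV Zu) !mulmxA -(mulmxA _ C) -ZC mulmxA mulVmx // mul1mx.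
Qed.

Variable Z : 'M[R]_(k * n).
Hypothesis Z_comm : forall A : 'M[R]_k, A \in unitmx ->
  Z *m (A *t (1%:M : 'M_n)) = (A *t (1%:M : 'M_n)) *m Z.

Lemma commute_delta_tens1 (i j : 'I_k) : i != j ->
  Z *m (delta_mx i j *t (1%:M : 'M_n)) = (delta_mx i j *t (1%:M : 'M_n)) *m Z.
Proof.
move=> neq_ij; have := Z_comm (unitmx_1Ddelta neq_ij).
by rewrite tensmxDl tensmx11 mulmxDr mulmxDl mulmx1 mul1mx => /addrI.
Qed.

Lemma tens1mx_diag_block (i0 : 'I_k) : Z = (1%:M : 'M_k) *t diag_block i0 Z.
Proof.
have entry_comm i j p q : i != j ->
    (Z *m (delta_mx i j *t 1%:M)) p q = ((delta_mx i j *t 1%:M) *m Z) p q.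
  by move=> neq_ij; rewrite commute_delta_tens1.
apply/matrixP=> p q; case: (mxtens_indexP p)=> a r; case: (mxtens_indexP q)=> b s.
rewrite tensmxE !mxE.
have [<-|neq_ab] := eqVneq a b.
  rewrite mul1r; have [->|neq_a] := eqVneq a i0; first by [].
  have := entry_comm a i0 (mxtens_index (a, r)) (mxtens_index (i0, s)) neq_a.
  by rewrite mul_tensmx_delta1E mul_delta1_tensmxE !eqxx !mul1r.
have := entry_comm b a (mxtens_index (a, r)) (mxtens_index (a, s)).
rewrite eq_sym neq_ab mul_tensmx_delta1E mul_delta1_tensmxE eqxx (negbTE neq_ab).
by rewrite mul1r !mul0r => ->.
Qed.

End CommutantOfScalarBlocks.

Lemma tens1mx_commutant (R : comUnitRingType) k n (i0 : 'I_k) (X : 'M[R]_(k * n)) :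
  X \in unitmx ->
  (forall A : 'M[R]_k, A \in unitmx ->
     X *m (A *t (1%:M : 'M_n)) = (A *t (1%:M : 'M_n)) *m X) ->
  exists2 M : 'M[R]_n, M \in unitmx & X = (1%:M : 'M_k) *t M.
Proof.
move=> Xu X_comm.
have Xinv_comm A : A \in unitmx ->
    invmx X *m (A *t (1%:M : 'M_n)) = (A *t (1%:M : 'M_n)) *m invmx X.
  by move=> Au; apply: commute_invmx; last exact: X_comm.
have X_tens := tens1mx_diag_block X_comm i0.
have Xinv_tens := tens1mx_diag_block Xinv_comm i0.
set M := diag_block i0 X in X_tens *; set N := diag_block i0 (invmx X) in Xinv_tens.
exists M => //; suff /mulmx1_unit[] : M *m N = 1%:M by [].
have := mulmxV Xu; rewrite {1}X_tens Xinv_tens tensmx_mul mulmx1 -(tensmx11 R k n).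
by move/(congr1 (diag_block i0)); rewrite !diag_block_tens1mx.
Qed.

Section IdentityAutomorphism.
Variables (V : finType) (e : rel V).

Definition gen_word (v : V) : seq (letter V) := [:: (v, false)].

Lemma subst_gen_word (w : seq (letter V)) : subst gen_word w = w.
Proof. by elim: w => //= [[x b] w]; rewrite /subst /= => ->; case: b. Qed.

Lemma raag_endo_gen_word : raag_endo e gen_word.
Proof.
split; first by move=> v vD; rewrite /Dword /= vD.
by move=> w1 w2 _ _; rewrite !subst_gen_word.
Qed.

Lemma raag_aut_gen_word : raag_aut e gen_word.
Proof.
split; first exact: raag_endo_gen_word.
exists gen_word; split; first exact: raag_endo_gen_word.
by move=> w _; rewrite !subst_gen_word; split; apply: rst_refl.
Qed.

Lemma ab_mx_gen_word : ab_mx e gen_word = 1%:M.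
Proof.
apply/matrixP=> r s; rewrite !mxE /expsum big_seq1 /=.
by rewrite (inj_eq enum_val_inj) eq_sym; case: (r == s).
Qed.

Lemma PhiDelta1 : @PhiDelta V e 1%:M.
Proof.
by exists gen_word; split; [exact: raag_aut_gen_word | rewrite ab_mx_gen_word].
Qed.

End IdentityAutomorphism.

Theorem mainTheorem5 (V : finType) (e : rel V)
  (e_sym : symmetric e) (e_irr : irreflexive e)
  (S_ne : social e != set0)
  (X : 'M[int]_(#|social e| * #|delta e|)) :
  X \in unitmx ->
  (forall (A : 'M[int]_#|social e|) (M : 'M[int]_#|delta e|),
     A \in unitmx -> @PhiDelta V e M ->
     X *m ((A *t (1%:M : 'M[int]_#|delta e|)) *m ((1%:M : 'M[int]_#|social e|) *t M))
     = ((A *t (1%:M : 'M[int]_#|delta e|)) *m ((1%:M : 'M[int]_#|social e|) *t M)) *m X) ->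
  exists2 M : 'M[int]_#|delta e|, M \in unitmx & X = (1%:M : 'M[int]_#|social e|) *t M.
Proof.
move=> Xu X_comm; have [v vS] := set0Pn _ S_ne.
apply: (tens1mx_commutant (enum_rank_in vS v) Xu) => A Au.
by have := X_comm A 1%:M Au (@PhiDelta1 V e); rewrite tensmx_mul !mulmx1.
Qed.
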